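(* Let $\lambda$ be a nonzero real number and $n$ a positive integer. Then, as polynomials in $x$, $$F_{n+1,\lambda}(x)=(x-n\lambda)F_{n,\lambda}(x)+(x+x^{2})F_{n,\lambda}'(x),$$ where $F_{n,\lambda}'(x)=\frac{d}{dx}F_{n,\lambda}(x)$.
   Context: For real $y$ and integer $k\ge0$: $(y)_{0,\lambda}=1$, $(y)_{k,\lambda}=y(y-\lambda)\cdots(y-(k-1)\lambda)$. The degenerate exponential is $e_\lambda(t)=\sum_{k\ge0}(1)_{k,\lambda}t^k/k!=(1+\lambda t)^{1/\lambda}$. The degenerate Fubini polynomials are defined by $\frac{1}{1-x(e_\lambda(t)-1)}=\sum_{n\ge0}F_{n,\lambda}(x)\frac{t^n}{n!}$. *)

From HB Require Import structures.
From mathcomp Require Import all_boot all_order all_algebra.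
From mathcomp Require Import reals.
Set Implicit Arguments. Unset Strict Implicit. Unset Printing Implicit Defensive.
Import Order.TTheory GRing.Theory Num.Theory.
Local Open Scope ring_scope.

Definition dfall {R : realType} (y lam : R) (k : nat) : R :=
  \prod_(i < k) (y - i%:R * lam).

(* Formal power series in t are represented by their coefficient sequences
   (coefficient of t^n, NOT of t^n/n!), with coefficients in a ring A. *)
Definition ps_mul {A : ringType} (a b : nat -> A) : nat -> A :=
  fun n => \sum_(i < n.+1) a i * b (n - i)%N.

Definition ps_one {A : ringType} : nat -> A := fun n => if n == 0%N then 1 else 0.

Definition ps_exp {A : ringType} (a : nat -> A) (k : nat) : nat -> A :=
  iter k (ps_mul a) ps_one.

(* Coefficients (in t) of e_lambda(t) - 1 = sum_{m>=1} (1)_{m,lambda} t^m / m!. *)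
Definition elam_minus1 {R : realType} (lam : R) : nat -> R :=
  fun m => if m == 0%N then 0 else dfall 1 lam m / (m`!)%:R.

Definition x_elam_minus1 {R : realType} (lam : R) : nat -> {poly R} :=
  fun m => 'X * (elam_minus1 lam m)%:P.

(* 1/(1 - x(e_lambda(t)-1)) = sum_{k>=0} (x(e_lambda(t)-1))^k as a formal power
   series in t; since x(e_lambda(t)-1) has zero constant term, only k <= n
   contribute to the coefficient of t^n.  F_{n,lambda}(x) is n! times that
   coefficient. *)
Definition dfubini {R : realType} (n : nat) (lam : R) : {poly R} :=
  (n`!)%:R *: \sum_(k < n.+1) ps_exp (x_elam_minus1 lam) k n.

From HB Require Import structures.
From mathcomp Require Import all_boot all_order all_algebra.
From mathcomp Require Import reals.
From mathcomp Require Import ring zify.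
Import Order.TTheory GRing.Theory Num.Theory.
Local Open Scope ring_scope.

(** The series E(t) = e_lambda(t) - 1 solves (1 + lambda t) E' = 1 + E, hence
    (1 + lambda t) (E^k)' = k (E^(k-1) + E^k).  Comparing coefficients of t^n
    gives (n+1) [t^(n+1)] E^k = k [t^n] E^(k-1) + (k - n lambda) [t^n] E^k, and
    since F_(n,lambda)(x) = n! sum_k ([t^n] E^k) x^k this is, coefficient by
    coefficient in x, the claimed identity.  Coefficients of t^n with n < N are
    computed in the truncation of E to a polynomial of size N. *)

Section PowerSeriesPowers.
Variables (A : nzRingType) (a : nat -> A).

Lemma ps_exp0 n : ps_exp a 0 n = (n == 0)%:R.
Proof. by rewrite /ps_exp /ps_one /=; case: (n == 0)%N. Qed.

Lemma ps_expS k n : ps_exp a k.+1 n = \sum_(i < n.+1) a i * ps_exp a k (n - i).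
Proof. by []. Qed.

Lemma ps_exp_coef_poly N k n :
  (n < N)%N -> ps_exp a k n = ((\poly_(i < N) a i) ^+ k)`_n.
Proof.
elim: k n => [|k IHk] n ltnN; first by rewrite ps_exp0 expr0 coef1.
rewrite ps_expS exprS coefM; apply: eq_bigr => -[i lein] _ /=; rewrite ltnS in lein.
rewrite coef_poly (leq_ltn_trans lein ltnN) IHk //.
exact: leq_ltn_trans (leq_subr i n) ltnN.
Qed.

Lemma ps_exp_eq0 k n : a 0 = 0 -> (n < k)%N -> ps_exp a k n = 0.
Proof.
move=> a0; elim: k n => [|k IHk] n // ltnk.
rewrite ps_expS big1 // => -[[|i] lein] _ /=; first by rewrite a0 mul0r.
by rewrite IHk ?mulr0 //; lia.
Qed.

End PowerSeriesPowers.

Lemma ps_exp_XpolyC (A : nzRingType) (a : nat -> A) k n :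
  ps_exp (fun m => 'X * (a m)%:P) k n = 'X^k * (ps_exp a k n)%:P.
Proof.
elim: k n => [|k IHk] n.
  by rewrite !ps_exp0 expr0 mul1r polyC_natr.
rewrite !ps_expS rmorph_sum mulr_sumr; apply: eq_bigr => i _.
rewrite IHk rmorphM exprS -!mulrA; congr (_ * _); rewrite !mulrA; congr (_ * _).
exact: commr_polyXn.
Qed.

Lemma coef_Xderiv (A : nzRingType) (p : {poly A}) i : ('X * p^`())`_i = p`_i *+ i.
Proof. by rewrite coefXM; case: i => [|i] //=; rewrite coef_deriv. Qed.

Lemma take_polyMl (A : nzRingType) N (r p q : {poly A}) :
  take_poly N p = take_poly N q -> take_poly N (r * p) = take_poly N (r * q).
Proof.
move=> eq_pq; apply/polyP => i; rewrite !coef_take_poly; case: ifP => // ltiN.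
rewrite !coefM; apply: eq_bigr => -[j _] _ /=; congr (_ * _).
have := congr1 (coefp (i - j)) eq_pq.
by rewrite /= !coef_take_poly (leq_ltn_trans (leq_subr j i) ltiN).
Qed.

Section DegenerateExponential.
Variables (R : realType) (lam : R).

Local Notation e := (elam_minus1 lam).
Local Notation E N := (\poly_(i < N) e i).

Lemma dfallS y k : dfall y lam k.+1 = dfall y lam k * (y - k%:R * lam).
Proof. by rewrite /dfall big_ord_recr. Qed.

Lemma elam_minus1_rec m :
  m.+1%:R * e m.+1 = e m * (1 - m%:R * lam) + (m == 0)%:R.
Proof.
case: m => [|m]; first by rewrite /elam_minus1 /dfall big_ord1 factS fact0 /=; field.
rewrite /elam_minus1 /= dfallS factS natrM.
have fact_neq0 : (m.+1)`!%:R != 0 :> R by rewrite pnatr_eq0 -lt0n fact_gt0.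
by field; rewrite fact_neq0 -natrD pnatr_eq0.
Qed.

(* The differential equation of E, multiplied by t and read modulo t^N. *)
Lemma elam_ode N :
  take_poly N ('X * (E N)^`() + lam%:P * ('X * ('X * (E N)^`()))) =
  take_poly N ('X * (1 + E N)).
Proof.
apply/polyP => i; rewrite !coef_take_poly; case: ifP => // ltiN.
rewrite coefD coefCM coef_Xderiv coefXM coef_Xderiv coefXM.
case: i ltiN => [|m] ltmN /=; first by rewrite mulr0n mulr0 addr0.
rewrite coefD coef1 !coef_poly ltmN (ltnW ltmN).
by rewrite -[e m.+1 *+ _]mulr_natl elam_minus1_rec -mulr_natl; ring.
Qed.

Lemma ps_exp_elam_rec k n :
  n.+1%:R * ps_exp e k n.+1 =
  k%:R * ps_exp e k.-1 n + (k%:R - n%:R * lam) * ps_exp e k n.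
Proof.
rewrite !(@ps_exp_coef_poly _ e n.+2) //.
case: k => [|k]; first by rewrite expr0 !coef1 /=; case: n => [|n] /=; ring.
set P := E n.+2.
have powE : P ^+ k *+ k.+1 * ('X * P^`() + lam%:P * ('X * ('X * P^`()))) =
    'X * (P ^+ k.+1)^`() + lam%:P * ('X * ('X * (P ^+ k.+1)^`())).
  by rewrite deriv_exp /=; ring.
have rhsE : P ^+ k *+ k.+1 * ('X * (1 + P)) = 'X * (P ^+ k + P ^+ k.+1) *+ k.+1.
  by rewrite exprS; ring.
have := @take_polyMl _ n.+2 (P ^+ k *+ k.+1) _ _ (elam_ode n.+2).
rewrite powE rhsE => /(congr1 (coefp n.+1)) /=.
rewrite !coef_take_poly ltnSn coefD coefCM coef_Xderiv coefXM coef_Xderiv.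
rewrite coefMn coefXM coefD /= => coef_ode.
apply: (addIr (lam * ((P ^+ k.+1)`_n *+ n))).
by rewrite mulr_natl coef_ode; ring.
Qed.

Lemma coef_dfubini m j : (dfubini m lam)`_j = m`!%:R * ps_exp e j m.
Proof.
rewrite /dfubini coefZ coef_sum; congr (_ * _).
transitivity (\sum_(k < m.+1 | k == j :> nat) ps_exp e k m).
  rewrite [RHS]big_mkcond; apply: eq_bigr => k _ /=.
  by rewrite ps_exp_XpolyC coefXnM coefC subn_eq0; case: ltngtP.
rewrite (big_ord1_eq _ (fun k => ps_exp e k m)); case: ltnP => // ltmj.
by rewrite ps_exp_eq0.
Qed.

End DegenerateExponential.

Theorem theorem14 (R : realType) (lam : R) (n : nat) :
  lam != 0 -> (0 < n)%N ->
  dfubini n.+1 lam =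
    ('X - (n%:R * lam)%:P) * dfubini n lam + ('X + 'X^2) * (dfubini n lam)^`().
Proof.
move=> _ _; apply/polyP => j; set F := dfubini n lam.
have -> : ('X - (n%:R * lam)%:P) * F + ('X + 'X^2) * F^`() =
    'X * (F + 'X * F^`()) + 'X * F^`() - (n%:R * lam)%:P * F by ring.
rewrite coefB coefD coefCM coef_Xderiv coefXM coefD coef_Xderiv !coef_dfubini.
by case: j => [|j]; rewrite factS natrM -mulrA mulrCA ps_exp_elam_rec /=; ring.
Qed.
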